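(* Suppose Assumptions 1 and 2 hold. Then the modified dual function $g^m(\lambda)=\sum_{i=1}^N g_i^m(\lambda)$, where $g_i^m(\lambda)=\mathcal{L}^r_i(\hat{x}_i(\lambda),\lambda)$, is continuously differentiable and concave on all of $\mathbb{R}$.
   Context: For $i=1,\dots,N$: $d_i\in\mathbb{R}$, $\mathcal{X}_i=[\underline{x}_i,\bar{x}_i]$ a nonempty closed interval, $f_i,\phi_i:\mathbb{R}\to\mathbb{R}$. Assumption 1: for each $i$, $f_i$ and $\phi_i$ are continuously differentiable, $f_i$ is strictly convex on $\mathcal{X}_i$, $\phi_i$ is convex on $\mathcal{X}_i$, and $\phi_i'(x_i)<1$ for all $x_i\in\mathcal{X}_i$. Assumption 2: $f_i'(x_i)>0$ for all $x_i\in\mathcal{X}_i$ and all $i$. Local Lagrangian: $\mathcal{L}^r_i(x_i,\lambda)=f_i(x_i)+\lambda\big(d_i-x_i+\phi_i(x_i)\big)$. Let $v_i(x_i)=f_i'(x_i)(1-\phi_i'(x_i))^{-1}$ on $\mathcal{X}_i$ (strictly increasing under the assumptions). Define for $\lambda\in\mathbb{R}$: $\hat{x}_i(\lambda)=\underline{x}_i$ if $\lambda\le v_i(\underline{x}_i)$; $\hat{x}_i(\lambda)=v_i^{-1}(\lambda)$ if $v_i(\underline{x}_i)<\lambda<v_i(\bar{x}_i)$; $\hat{x}_i(\lambda)=\bar{x}_i$ if $\lambda\ge v_i(\bar{x}_i)$. *)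

From Stdlib Require Import Reals Lra List ClassicalEpsilon.
Open Scope R_scope.

Definition convex_on (a b : R) (h : R -> R) : Prop :=
  forall x y t, a <= x <= b -> a <= y <= b -> 0 <= t <= 1 ->
    h (t * x + (1 - t) * y) <= t * h x + (1 - t) * h y.

Definition strictly_convex_on (a b : R) (h : R -> R) : Prop :=
  forall x y t, a <= x <= b -> a <= y <= b -> x <> y -> 0 < t < 1 ->
    h (t * x + (1 - t) * y) < t * h x + (1 - t) * h y.

Definition concave (g : R -> R) : Prop :=
  forall x y t, 0 <= t <= 1 ->
    t * g x + (1 - t) * g y <= g (t * x + (1 - t) * y).

Definition vfun (df dphi : R -> R) (x : R) : R := df x * / (1 - dphi x).

(* v^{-1}(lam): some x in [lo,hi] with v x = lam (unique when v is strictly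
   increasing on [lo,hi] and such x exists). *)
Definition vinv (lo hi : R) (v : R -> R) (lam : R) : R :=
  epsilon (inhabits lo) (fun x => lo <= x <= hi /\ v x = lam).

Definition xhat (lo hi : R) (v : R -> R) (lam : R) : R :=
  if Rle_dec lam (v lo) then lo
  else if Rlt_dec lam (v hi) then vinv lo hi v lam
  else hi.

Definition Lr (f phi : R -> R) (d x lam : R) : R :=
  f x + lam * (d - x + phi x).

Definition gim (f phi df dphi : R -> R) (d lo hi lam : R) : R :=
  Lr f phi d (xhat lo hi (vfun df dphi) lam) lam.

Definition gm (N : nat) (f phi df dphi : nat -> R -> R) (d lo hi : nat -> R)
  (lam : R) : R :=
  fold_right Rplus 0
    (map (fun i => gim (f i) (phi i) (df i) (dphi i) (d i) (lo i) (hi i) lam)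
         (seq 0 N)).

(** For each [lambda], [xhat_i lambda] minimises the local Lagrangian
    [L_i(., lambda)] over [X_i]: the [x]-derivative of [L_i] is
    [(1 - phi_i'(x)) (v_i(x) - lambda)], which changes sign exactly at
    [xhat_i lambda].  Hence [g_i^m(lambda) = min_x L_i(x, lambda)] and, [L_i]
    being affine in [lambda], [C_i(lambda) := d_i - xhat_i lambda + phi_i
    (xhat_i lambda)] is a supergradient of [g_i^m] at every [lambda].  As
    [xhat_i] is continuous, so is [C_i], and a function with a continuous
    supergradient everywhere is concave and continuously differentiable with
    that supergradient as derivative.  Both properties pass to the sum. *)
From Stdlib Require Import Reals Lra Lia List ClassicalEpsilon.
Open Scope R_scope.

Definition has_supergradient (G C : R -> R) : Prop :=
  forall lam mu, G mu <= G lam + (mu - lam) * C lam.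

Lemma has_supergradient_concave (G C : R -> R) :
  has_supergradient G C -> concave G.
Proof.
  intros HG x y t Ht.
  set (z := t * x + (1 - t) * y).
  assert (Hx : t * G x <= t * (G z + (x - z) * C z))
    by (apply Rmult_le_compat_l; [lra | apply HG]).
  assert (Hy : (1 - t) * G y <= (1 - t) * (G z + (y - z) * C z))
    by (apply Rmult_le_compat_l; [lra | apply HG]).
  assert (t * (G z + (x - z) * C z) + (1 - t) * (G z + (y - z) * C z) = G z)
    by (unfold z; ring).
  lra.
Qed.

(* The difference quotient over [h] lies between [C lam] and [C (lam + h)]. *)
Lemma has_supergradient_derivable (G C : R -> R) :
  has_supergradient G C -> continuity C ->
  forall lam, derivable_pt_lim G lam (C lam).
Proof.
  intros HG HC lam eps Heps.
  destruct (HC lam eps Heps) as [al [Hal Hc]].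
  exists (mkposreal al Hal); intros h Hh0 Hh; simpl in Hh.
  assert (Hch : Rabs (C (lam + h) - C lam) < eps).
  { apply Hc; split; [split; [exact I | lra] |].
    simpl; unfold R_dist; replace (lam + h - lam) with h by ring; exact Hh. }
  assert (Hup := HG lam (lam + h)); assert (Hlow := HG (lam + h) lam).
  replace (lam + h - lam) with h in Hup by ring.
  replace (lam - (lam + h)) with (- h) in Hlow by ring.
  apply Rabs_def2 in Hch.
  set (q := (G (lam + h) - G lam) / h).
  assert (Hq : h * q = G (lam + h) - G lam) by (unfold q; field; exact Hh0).
  apply Rabs_def1; destruct (Rlt_dec 0 h); nra.
Qed.

Lemma has_supergradient_sum (G C : nat -> R -> R) (l : list nat) :
  (forall i, In i l -> has_supergradient (G i) (C i)) ->
  has_supergradient (fun lam => fold_right Rplus 0 (map (fun i => G i lam) l))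
                    (fun lam => fold_right Rplus 0 (map (fun i => C i lam) l)).
Proof.
  induction l as [| j l IH]; intros Hl lam mu; simpl; [lra |].
  assert (Hj := Hl j (or_introl eq_refl) lam mu).
  assert (Htl := IH (fun i Hi => Hl i (or_intror Hi)) lam mu).
  simpl in Htl; nra.
Qed.

Lemma continuity_sum (C : nat -> R -> R) (l : list nat) :
  (forall i, In i l -> continuity (C i)) ->
  continuity (fun lam => fold_right Rplus 0 (map (fun i => C i lam) l)).
Proof.
  induction l as [| j l IH]; intros Hl; simpl.
  - apply continuity_const; intros ? ?; reflexivity.
  - apply (continuity_plus (C j)); [apply Hl; left; reflexivity |].
    apply IH; intros i Hi; apply Hl; right; exact Hi.
Qed.

Lemma derivable_le_of_right_quotients (g : R -> R) (a L B : R) :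
  derivable_pt_lim g a L ->
  (forall t, 0 < t <= 1 -> (g (a + t) - g a) / t <= B) -> L <= B.
Proof.
  intros Hg Hq; apply Rnot_lt_le; intro HBL.
  destruct (Hg (L - B) ltac:(lra)) as [del Hdel].
  set (t := Rmin 1 (del / 2)).
  assert (Ht : 0 < t <= 1).
  { split; [apply Rmin_pos; [lra | pose proof (cond_pos del); lra] | apply Rmin_l]. }
  assert (Htdel : t < del)
    by (pose proof (cond_pos del); assert (t <= del / 2) by apply Rmin_r; lra).
  assert (Hclose := Hdel t ltac:(lra) ltac:(rewrite Rabs_pos_eq; lra)).
  apply Rabs_def2 in Hclose; specialize (Hq t Ht); lra.
Qed.

Lemma convex_on_tangent_le (lo hi : R) (h dh : R -> R) :
  convex_on lo hi h -> (forall x, derivable_pt_lim h x (dh x)) ->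
  forall x y, lo <= x <= hi -> lo <= y <= hi -> dh x * (y - x) <= h y - h x.
Proof.
  intros Hc Hd x y Hx Hy.
  set (g := fun t => h (x + t * (y - x))).
  assert (Hg : derivable_pt_lim g 0 (dh x * (y - x))).
  { apply (derivable_pt_lim_comp (fun t => x + t * (y - x)) h).
    - assert (Hline : derivable_pt_lim (plus_fct (fct_cte x) (mult_fct id (fct_cte (y - x))))
                          0 (0 + (1 * fct_cte (y - x) 0 + id 0 * 0))).
      { apply derivable_pt_lim_plus; [apply derivable_pt_lim_const |].
        apply derivable_pt_lim_mult; [apply derivable_pt_lim_id | apply derivable_pt_lim_const]. }
      unfold fct_cte, id in Hline; rewrite Rmult_0_r, Rplus_0_r, Rplus_0_l, Rmult_1_l in Hline.
      exact Hline.
    - replace (x + 0 * (y - x)) with x by ring; apply Hd. }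
  apply (derivable_le_of_right_quotients g 0); [exact Hg |].
  intros t Ht; unfold g.
  replace (0 + t) with t by ring; replace (x + 0 * (y - x)) with x by ring.
  replace (x + t * (y - x)) with (t * y + (1 - t) * x) by ring.
  assert (h (t * y + (1 - t) * x) <= t * h y + (1 - t) * h x) by (apply Hc; auto; lra).
  apply Rmult_le_reg_l with t; [lra |].
  unfold Rdiv; rewrite (Rmult_comm _ (/ t)), <- Rmult_assoc, Rinv_r, Rmult_1_l by lra.
  lra.
Qed.

Lemma strictly_convex_on_convex_on (lo hi : R) (h : R -> R) :
  strictly_convex_on lo hi h -> convex_on lo hi h.
Proof.
  intros Hs x y t Hx Hy Ht.
  destruct (Req_dec x y) as [<- | Hxy].
  { replace (t * x + (1 - t) * x) with x by ring; lra. }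
  destruct (Req_dec t 0) as [-> | Ht0].
  { replace (0 * x + (1 - 0) * y) with y by ring; lra. }
  destruct (Req_dec t 1) as [-> | Ht1].
  { replace (1 * x + (1 - 1) * y) with x by ring; lra. }
  left; apply Hs; auto; lra.
Qed.

Lemma convex_on_deriv_le (lo hi : R) (h dh : R -> R) :
  convex_on lo hi h -> (forall x, derivable_pt_lim h x (dh x)) ->
  forall x y, lo <= x <= hi -> lo <= y <= hi -> x < y -> dh x <= dh y.
Proof.
  intros Hc Hd x y Hx Hy Hxy.
  assert (Hxy' := convex_on_tangent_le lo hi h dh Hc Hd x y Hx Hy).
  assert (Hyx' := convex_on_tangent_le lo hi h dh Hc Hd y x Hy Hx).
  nra.
Qed.

(* Compare both tangents with the value at the midpoint, where strict convexity bites. *)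
Lemma strictly_convex_on_deriv_lt (lo hi : R) (h dh : R -> R) :
  strictly_convex_on lo hi h -> (forall x, derivable_pt_lim h x (dh x)) ->
  forall x y, lo <= x <= hi -> lo <= y <= hi -> x < y -> dh x < dh y.
Proof.
  intros Hs Hd x y Hx Hy Hxy.
  assert (Hc := strictly_convex_on_convex_on lo hi h Hs).
  set (z := / 2 * x + (1 - / 2) * y).
  assert (Hz : lo <= z <= hi) by (unfold z; lra).
  assert (Hmid : h z < / 2 * h x + (1 - / 2) * h y) by (apply Hs; auto; lra).
  assert (Htx := convex_on_tangent_le lo hi h dh Hc Hd x z Hx Hz).
  assert (Hty := convex_on_tangent_le lo hi h dh Hc Hd y z Hy Hz).
  unfold z in *; nra.
Qed.

Lemma deriv_sign_minimum (h dh : R -> R) (lo hi x0 : R) :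
  (forall x, derivable_pt_lim h x (dh x)) ->
  (forall c, lo <= c <= hi -> c < x0 -> dh c < 0) ->
  (forall c, lo <= c <= hi -> x0 < c -> 0 < dh c) ->
  lo <= x0 <= hi -> forall x, lo <= x <= hi -> h x0 <= h x.
Proof.
  intros Hd Hneg Hpos Hx0 x Hx.
  destruct (Rtotal_order x x0) as [Hlt | [-> | Hgt]]; [| lra |].
  - destruct (MVT_cor2 h dh x x0 Hlt (fun c _ => Hd c)) as [c [Hmvt Hc]].
    assert (dh c < 0) by (apply Hneg; lra).
    nra.
  - destruct (MVT_cor2 h dh x0 x Hgt (fun c _ => Hd c)) as [c [Hmvt Hc]].
    assert (0 < dh c) by (apply Hpos; lra).
    nra.
Qed.

Section XHat.

Variables (lo hi : R) (v : R -> R).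
Hypothesis Hlohi : lo <= hi.
Hypothesis Hv_incr : forall x y, lo <= x <= hi -> lo <= y <= hi -> x < y -> v x < v y.
Hypothesis Hv_cont : forall x, lo <= x <= hi -> continuity_pt v x.

Lemma vinv_spec (lam : R) : v lo < lam < v hi ->
  lo <= vinv lo hi v lam <= hi /\ v (vinv lo hi v lam) = lam.
Proof.
  intros Hlam; unfold vinv; apply epsilon_spec.
  assert (Hlt : lo < hi)
    by (destruct Hlohi as [| E]; [assumption | subst; lra]).
  destruct (Ranalysis5.IVT_interv (fun x => v x - lam) lo hi) as [z [Hz Hvz]];
    simpl; try lra.
  - intros x Hx; apply continuity_pt_minus; [apply Hv_cont; lra |].
    apply continuity_pt_const; intros ? ?; reflexivity.
  - exists z; split; [lra | lra].
Qed.

Lemma xhat_spec (lam : R) :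
  let x0 := xhat lo hi v lam in
  lo <= x0 <= hi /\
  (forall x, lo <= x <= hi -> x < x0 -> v x < lam) /\
  (forall x, lo <= x <= hi -> x0 < x -> lam < v x).
Proof.
  unfold xhat.
  destruct (Rle_dec lam (v lo)) as [Hlo | Hlo].
  { split; [lra | split; intros x Hx Hxx; [lra |]].
    pose proof (Hv_incr lo x ltac:(lra) Hx Hxx); lra. }
  destruct (Rlt_dec lam (v hi)) as [Hhi | Hhi].
  - destruct (vinv_spec lam ltac:(lra)) as [Hr Heq].
    split; [exact Hr | split; intros x Hx Hxx; rewrite <- Heq; apply Hv_incr; auto].
  - split; [lra | split; intros x Hx Hxx; [| lra]].
    pose proof (Hv_incr x hi Hx ltac:(lra) Hxx); lra.
Qed.

(* Leaving [x0 - eps/2, x0 + eps/2] forces [v] to cross a value at positive distance from [lam]. *)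
Lemma continuity_xhat : continuity (xhat lo hi v).
Proof.
  intros lam eps Heps.
  destruct (xhat_spec lam) as [Hr [Hbelow Habove]].
  set (x0 := xhat lo hi v lam) in *.
  set (b := x0 + eps / 2); set (a := x0 - eps / 2).
  set (d1 := if Rle_dec b hi then v b - lam else 1).
  set (d2 := if Rle_dec lo a then lam - v a else 1).
  assert (Hd1 : 0 < d1).
  { unfold d1; destruct (Rle_dec b hi); [| lra].
    pose proof (Habove b ltac:(unfold b in *; lra) ltac:(unfold b; lra)); lra. }
  assert (Hd2 : 0 < d2).
  { unfold d2; destruct (Rle_dec lo a); [| lra].
    pose proof (Hbelow a ltac:(unfold a in *; lra) ltac:(unfold a; lra)); lra. }
  exists (Rmin d1 d2); split; [apply Rmin_pos; assumption |].
  intros mu [_ Hmu]; simpl in *; unfold R_dist in *.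
  assert (Hm1 : Rabs (mu - lam) < d1) by (eapply Rlt_le_trans; [exact Hmu | apply Rmin_l]).
  assert (Hm2 : Rabs (mu - lam) < d2) by (eapply Rlt_le_trans; [exact Hmu | apply Rmin_r]).
  apply Rabs_def2 in Hm1; apply Rabs_def2 in Hm2.
  destruct (xhat_spec mu) as [Hr' [Hbelow' Habove']].
  assert (Hub : xhat lo hi v mu <= b).
  { unfold d1 in Hm1; destruct (Rle_dec b hi); [| lra].
    apply Rnot_lt_le; intro Hc; pose proof (Hbelow' b ltac:(unfold b in *; lra) Hc); lra. }
  assert (Hlb : a <= xhat lo hi v mu).
  { unfold d2 in Hm2; destruct (Rle_dec lo a); [| lra].
    apply Rnot_lt_le; intro Hc; pose proof (Habove' a ltac:(unfold a in *; lra) Hc); lra. }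
  unfold a, b in *; apply Rabs_def1; lra.
Qed.

End XHat.

Section Component.

Variables (f phi df dphi : R -> R) (d lo hi : R).
Hypothesis Hlohi : lo <= hi.
Hypothesis Hdf : forall x, derivable_pt_lim f x (df x).
Hypothesis Hdfc : continuity df.
Hypothesis Hdphi : forall x, derivable_pt_lim phi x (dphi x).
Hypothesis Hdphic : continuity dphi.
Hypothesis Hfconv : strictly_convex_on lo hi f.
Hypothesis Hphiconv : convex_on lo hi phi.
Hypothesis Hdphi1 : forall x, lo <= x <= hi -> dphi x < 1.
Hypothesis Hdfpos : forall x, lo <= x <= hi -> 0 < df x.

Lemma vfun_increasing x y : lo <= x <= hi -> lo <= y <= hi -> x < y ->
  vfun df dphi x < vfun df dphi y.
Proof.
  intros Hx Hy Hxy.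
  assert (Hdfxy := strictly_convex_on_deriv_lt lo hi f df Hfconv Hdf x y Hx Hy Hxy).
  assert (Hdphixy := convex_on_deriv_le lo hi phi dphi Hphiconv Hdphi x y Hx Hy Hxy).
  assert (Hx1 := Hdphi1 x Hx); assert (Hy1 := Hdphi1 y Hy); assert (Hpos := Hdfpos x Hx).
  unfold vfun.
  apply Rle_lt_trans with (df x * / (1 - dphi y)).
  - apply Rmult_le_compat_l; [lra | apply Rinv_le_contravar; lra].
  - apply Rmult_lt_compat_r; [apply Rinv_0_lt_compat |]; lra.
Qed.

Lemma vfun_continuous x : lo <= x <= hi -> continuity_pt (vfun df dphi) x.
Proof.
  intros Hx.
  change (continuity_pt (mult_fct df (inv_fct (minus_fct (fct_cte 1) dphi))) x).
  apply continuity_pt_mult; [apply Hdfc |].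
  apply continuity_pt_inv.
  - apply continuity_pt_minus; [apply continuity_pt_const; intros ? ?; reflexivity | apply Hdphic].
  - unfold minus_fct, fct_cte; pose proof (Hdphi1 x Hx); lra.
Qed.

Lemma derivable_Lr lam x :
  derivable_pt_lim (fun y => Lr f phi d y lam) x (df x + lam * (0 - 1 + dphi x)).
Proof.
  change (derivable_pt_lim
    (plus_fct f (mult_real_fct lam (plus_fct (minus_fct (fct_cte d) id) phi)))
    x (df x + lam * (0 - 1 + dphi x))).
  apply derivable_pt_lim_plus; [apply Hdf |].
  apply derivable_pt_lim_scal, derivable_pt_lim_plus; [| apply Hdphi].
  apply derivable_pt_lim_minus; [apply derivable_pt_lim_const | apply derivable_pt_lim_id].
Qed.

Lemma xhat_minimizes_Lr lam x : lo <= x <= hi ->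
  Lr f phi d (xhat lo hi (vfun df dphi) lam) lam <= Lr f phi d x lam.
Proof.
  destruct (xhat_spec lo hi (vfun df dphi) Hlohi vfun_increasing vfun_continuous lam)
    as [Hr [Hbelow Habove]].
  assert (Hfactor : forall c, lo <= c <= hi ->
    df c + lam * (0 - 1 + dphi c) = (1 - dphi c) * (vfun df dphi c - lam)).
  { intros c Hc; pose proof (Hdphi1 c Hc); unfold vfun; field; lra. }
  apply (deriv_sign_minimum _ _ lo hi _ (derivable_Lr lam)); [| | exact Hr].
  - intros c Hc Hcx; rewrite Hfactor by exact Hc.
    pose proof (Hbelow c Hc Hcx); pose proof (Hdphi1 c Hc); nra.
  - intros c Hc Hcx; rewrite Hfactor by exact Hc.
    apply Rmult_lt_0_compat; [pose proof (Hdphi1 c Hc) | pose proof (Habove c Hc Hcx)]; lra.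
Qed.

Definition constraint_at_xhat (lam : R) : R :=
  d - xhat lo hi (vfun df dphi) lam + phi (xhat lo hi (vfun df dphi) lam).

Lemma gim_supergradient :
  has_supergradient (gim f phi df dphi d lo hi) constraint_at_xhat.
Proof.
  intros lam mu.
  destruct (xhat_spec lo hi (vfun df dphi) Hlohi vfun_increasing vfun_continuous lam)
    as [Hr _].
  assert (Hmin := xhat_minimizes_Lr mu _ Hr).
  unfold gim, constraint_at_xhat, Lr in *; lra.
Qed.

Lemma continuity_constraint_at_xhat : continuity constraint_at_xhat.
Proof.
  assert (Hx := continuity_xhat lo hi (vfun df dphi) Hlohi vfun_increasing vfun_continuous).
  intros lam; unfold constraint_at_xhat.
  change (continuity_pt (plus_fct (minus_fct (fct_cte d) (xhat lo hi (vfun df dphi)))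
    (comp phi (xhat lo hi (vfun df dphi)))) lam).
  apply continuity_pt_plus.
  - apply continuity_pt_minus; [apply continuity_pt_const; intros ? ?; reflexivity | apply Hx].
  - apply continuity_pt_comp; [apply Hx |].
    apply derivable_continuous_pt; eexists; apply Hdphi.
Qed.

End Component.

Theorem lemma3 (N : nat) (f phi df dphi : nat -> R -> R) (d lo hi : nat -> R)
  (Hint : forall i, (i < N)%nat -> lo i <= hi i)
  (Hdf : forall i, (i < N)%nat -> forall x, derivable_pt_lim (f i) x (df i x))
  (Hdfc : forall i, (i < N)%nat -> continuity (df i))
  (Hdphi : forall i, (i < N)%nat -> forall x, derivable_pt_lim (phi i) x (dphi i x))
  (Hdphic : forall i, (i < N)%nat -> continuity (dphi i))
  (Hfconv : forall i, (i < N)%nat -> strictly_convex_on (lo i) (hi i) (f i))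
  (Hphiconv : forall i, (i < N)%nat -> convex_on (lo i) (hi i) (phi i))
  (Hdphi1 : forall i, (i < N)%nat -> forall x, lo i <= x <= hi i -> dphi i x < 1)
  (Hdfpos : forall i, (i < N)%nat -> forall x, lo i <= x <= hi i -> 0 < df i x) :
  (exists dg : R -> R,
      (forall lam, derivable_pt_lim (gm N f phi df dphi d lo hi) lam (dg lam))
      /\ continuity dg)
  /\ concave (gm N f phi df dphi d lo hi).
Proof.
  set (C := fun i => constraint_at_xhat (phi i) (df i) (dphi i) (d i) (lo i) (hi i)).
  set (dg := fun lam => fold_right Rplus 0 (map (fun i => C i lam) (seq 0 N))).
  assert (HG : has_supergradient (gm N f phi df dphi d lo hi) dg).
  { apply has_supergradient_sum; intros i Hi.
    assert (HiN : (i < N)%nat) by (apply in_seq in Hi; lia).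
    apply gim_supergradient; auto. }
  assert (HC : continuity dg).
  { apply continuity_sum; intros i Hi.
    assert (HiN : (i < N)%nat) by (apply in_seq in Hi; lia).
    apply continuity_constraint_at_xhat with (f i); auto. }
  split.
  - exists dg; split; [apply has_supergradient_derivable |]; assumption.
  - exact (has_supergradient_concave _ _ HG).
Qed.
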